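(* For all $\epsilon\in[0,1]$ and all $z\in(0,+\infty)^{d_1}\times\{0\}^{d_2}$, the limit \[ \sigma^{\mathcal D}_\epsilon(z):=\lim_{n\to\infty}\frac1n\mathbb{E}\big[S^{\mathcal D}_\epsilon(\lfloor nz\rfloor)\big] \] exists (and is finite).
   Context: Fix $d_1\ge1$, $d_2\ge0$, $d=d_1+d_2$; $\mathbb{Z}^d=\mathbb{Z}^{d_1}\times\mathbb{Z}^{d_2}$, $\mathrm{Proj}^{d_2}$ the projection on the last $d_2$ coordinates, $\lfloor\cdot\rfloor$ the coordinatewise integer part. Sites $x\in\mathbb{Z}^d$ are independently open with probability $\epsilon$. For $x,y\in\mathbb{R}^d$: $x\prec y$ iff $x_i<y_i$ for all $i\le d_1$; $x\preceq y$ iff $x_i\le y_i$ for all $i\le d_1$. For $x\preceq y$ in $\mathbb{Z}^{d_1}\times\{0\}^{d_2}$, $\mathcal{D}_\epsilon(x,y)$ is the set of finite sequences $s=(w(1),\dots,w(k))$, $k\ge0$, of open sites with $x\preceq w(1)\prec\cdots\prec w(k)\prec y$; with $w(0)=x,w(k+1)=y$, $V(s)=\sum_{i=1}^{k+1}\|\mathrm{Proj}^{d_2}(w(i))-\mathrm{Proj}^{d_2}(w(i-1))\|_1$, $R(s)=k$, $S^{\mathcal D}_\epsilon(x,y)=\sup_{s\in\mathcal{D}_\epsilon(x,y)}(R(s)-V(s))$ and $S^{\mathcal D}_\epsilon(y)=S^{\mathcal D}_\epsilon(0,y)$. *)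

From HB Require Import structures.
From mathcomp Require Import all_boot all_order all_algebra.
From mathcomp Require Import all_classical all_reals all_analysis.
Set Implicit Arguments. Unset Strict Implicit. Unset Printing Implicit Defensive.
Import Order.TTheory GRing.Theory Num.Theory.
Local Open Scope ring_scope.
Local Open Scope classical_set_scope.

(* A site of Z^d = Z^{d1} x Z^{d2}: first component = first d1 coordinates,
   second component = last d2 coordinates (Proj^{d2}). *)
Definition site (d1 d2 : nat) := ({ffun 'I_d1 -> int} * {ffun 'I_d2 -> int})%type.

Section Dir.
Variables (d1 d2 : nat).
Implicit Types (x y w : site d1 d2).

Definition dprec x y : bool := [forall i, x.1 i < y.1 i].
Definition dpreceq x y : bool := [forall i, x.1 i <= y.1 i].

Definition proj_dist x y : int := \sum_(i < d2) `|y.2 i - x.2 i|.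

(* V(s) for s = (w(1),...,w(k)) with w(0) = x, w(k+1) = y *)
Fixpoint Vcost x (s : seq (site d1 d2)) y : int :=
  match s with
  | [::] => proj_dist x y
  | w :: s' => proj_dist x w + Vcost w s' y
  end.

Definition admissible (op : site d1 d2 -> bool) x y (s : seq (site d1 d2)) : bool :=
  all op s &&
  match s with
  | [::] => true
  | w :: s' => [&& dpreceq x w, path dprec w s' & dprec (last w s') y]
  end.

Definition SD (R : realType) (op : site d1 d2 -> bool) x y : R :=
  sup [set ((size s)%:R - (Vcost x s y)%:~R : R) | s in [set s | admissible op x y s]].

Definition site0 : site d1 d2 := ([ffun=> 0], [ffun=> 0]).

Definition floor_site (R : realType) (n : nat) (z : 'I_d1 -> R) : site d1 d2 :=
  ([ffun i => Num.floor (n%:R * z i)], [ffun=> 0]).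
End Dir.

(* The sites are independently open with probability eps: joint law on every
   finite family of distinct sites is the product Bernoulli(eps) law. *)
Definition iid_bernoulli_field (d1 d2 : nat) (R : realType) (dT : measure_display)
  (T : measurableType dT) (P : probability T R) (op : site d1 d2 -> T -> bool)
  (eps : R) : Prop :=
  (forall x, measurable [set w | op x w]) /\
  (forall (F : seq (site d1 d2)) (b : site d1 d2 -> bool), uniq F ->
     P [set w | forall x, x \in F -> op x w = b x] =
     (\prod_(x <- F) (if b x then eps else 1 - eps))%:E).

From HB Require Import structures.
From mathcomp Require Import all_boot all_order all_algebra.
From mathcomp Require Import all_classical all_reals all_analysis.
From mathcomp Require Import measurable_realfun zify ring lra.
Import Order.TTheory GRing.Theory Num.Theory.
Local Open Scope ring_scope.
Local Open Scope classical_set_scope.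

(* Put y_n := floor(n z) and a_n := E[S^D_eps(0, y_n)].  The argument is the
   classical superadditive one.
   1. Deterministic facts about S^D(x, y) = sup (R(s) - V(s)): it lies in
      [0, y_i - x_i]; it is monotone in its endpoint; it is translation
      invariant; and, concatenating admissible sequences and using the
      triangle inequality for V, S^D(x, y) + S^D(y, y') <= S^D(x, y').
   2. A site whose transversal coordinates exceed the longitudinal length of
      the box costs more than any sequence can gain, so S^D(x, x + y) only
      depends on the configuration in a finite window x + W(y).  Hence it is a
      finitely-valued random variable whose expectation is an explicit finite
      sum not depending on x (stationarity of the i.i.d. field).
   3. Consequently a_n + a_m <= a_(n+m) (since y_n + y_m <= y_(n+m)) and
      0 <= a_n <= n z_1; Fekete's lemma for superadditive sequences with
      linear growth gives the convergence of a_n / n. *)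

Set Implicit Arguments.
Unset Strict Implicit.
Unset Printing Implicit Defensive.

Section Chains.
Variables (d1 d2 : nat).
Local Notation site := (site d1 d2).
Implicit Types (a b c x y w u : site) (s : seq site).

Lemma proj_dist_ge0 x y : 0 <= proj_dist x y.
Proof. by apply: sumr_ge0 => i _. Qed.

Lemma proj_dist_triangle x w y : proj_dist x y <= proj_dist x w + proj_dist w y.
Proof.
rewrite /proj_dist -big_split /=; apply: ler_sum => i _.
have -> : y.2 i - x.2 i = (w.2 i - x.2 i) + (y.2 i - w.2 i) by ring.
exact: ler_normD.
Qed.

Lemma Vcost_ge_direct x s y : proj_dist x y <= Vcost x s y.
Proof.
elim: s x => [|u s IH] x //=.
exact: le_trans (proj_dist_triangle x u y) (lerD (lexx _) (IH u)).
Qed.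

Lemma Vcost_ge0 x s y : 0 <= Vcost x s y.
Proof. exact: le_trans (proj_dist_ge0 x y) (Vcost_ge_direct x s y). Qed.

Lemma Vcost_ge_visit x s y w :
  w \in s -> proj_dist x w + proj_dist w y <= Vcost x s y.
Proof.
elim: s x => [|u s IH] x //=; rewrite in_cons => /orP[/eqP->|ws].
  by rewrite lerD2l Vcost_ge_direct.
apply: le_trans (lerD (lexx _) (IH u ws)).
by rewrite addrA lerD2r proj_dist_triangle.
Qed.

Lemma Vcost_start_triangle x y s z : Vcost x s z <= proj_dist x y + Vcost y s z.
Proof.
case: s => [|u s] /=; first exact: proj_dist_triangle.
by rewrite addrA lerD2r proj_dist_triangle.
Qed.

Lemma Vcost_cat x s1 y s2 z : Vcost x (s1 ++ s2) z <= Vcost x s1 y + Vcost y s2 z.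
Proof.
elim: s1 x => [|u s1 IH] x /=; first exact: Vcost_start_triangle.
by rewrite -addrA lerD2l IH.
Qed.

Lemma Vcost_same_end x s y y' :
  (forall i, y.2 i = y'.2 i) -> Vcost x s y = Vcost x s y'.
Proof.
move=> h; elim: s x => [|u s IH] x /=; last by rewrite IH.
by apply: eq_bigr => i _; rewrite h.
Qed.

Lemma dprec_trans a b c : dprec a b -> dprec b c -> dprec a c.
Proof. by move=> /forallP h1 /forallP h2; apply/forallP => i; exact: lt_trans (h1 i) (h2 i). Qed.

Lemma dprec_dpreceq_trans a b c : dprec a b -> dpreceq b c -> dprec a c.
Proof. by move=> /forallP h1 /forallP h2; apply/forallP => i; exact: lt_le_trans (h1 i) (h2 i). Qed.

Lemma dpreceq_trans a b c : dpreceq a b -> dpreceq b c -> dpreceq a c.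
Proof. by move=> /forallP h1 /forallP h2; apply/forallP => i; exact: le_trans (h1 i) (h2 i). Qed.

Lemma dprecW a b : dprec a b -> dpreceq a b.
Proof. by move=> /forallP h; apply/forallP => i; exact: ltW (h i). Qed.

Lemma dpreceq_refl a : dpreceq a a.
Proof. by apply/forallP. Qed.

Lemma chain_between u s y : path (@dprec d1 d2) u s -> dprec (last u s) y ->
  forall w, w \in u :: s -> dpreceq u w && dprec w y.
Proof.
elim: s u => [|a s IH] u /=.
  by move=> _ hy w; rewrite inE => /eqP->; rewrite hy dpreceq_refl.
move=> /andP[ua pa] hl w; rewrite in_cons => /orP[/eqP->|ws].
  have /andP[_ ay] := IH a pa hl a (mem_head _ _).
  by rewrite (dprec_trans ua ay) dpreceq_refl.
have /andP[aw wy] := IH a pa hl w ws.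
by rewrite wy andbT (dpreceq_trans (dprecW ua) aw).
Qed.

Lemma admissible_between op x y s w : admissible op x y s -> w \in s ->
  [&& op w, dpreceq x w & dprec w y].
Proof.
rewrite /admissible => /andP[aop]; case: s aop => [|u s] // aop.
move=> /and3P[xu pu lu] ws; rewrite (allP aop w ws) /=.
have /andP[uw wy] := chain_between pu lu ws.
by rewrite wy andbT (dpreceq_trans xu uw).
Qed.

Lemma chain_length i u s y : path (@dprec d1 d2) u s -> dprec (last u s) y ->
  (size s).+1%:Z + u.1 i <= y.1 i.
Proof.
elim: s u => [|a s IH] u /=; first by move=> _ /forallP /(_ i); lia.
by move=> /andP[/forallP /(_ i) ua pa] hl; have := IH a pa hl; lia.
Qed.

Lemma admissible_length i op x y s : x.1 i <= y.1 i ->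
  admissible op x y s -> (size s)%:Z <= y.1 i - x.1 i.
Proof.
move=> hxy; rewrite /admissible => /andP[_]; case: s => [|u s]; first by move=> _ /=; lia.
by move=> /and3P[/forallP /(_ i) xu pu lu]; have := chain_length i pu lu => /=; lia.
Qed.

Lemma admissible_cat op x y z s1 s2 : dpreceq x y -> dpreceq y z ->
  admissible op x y s1 -> admissible op y z s2 -> admissible op x z (s1 ++ s2).
Proof.
move=> xy yz; rewrite /admissible all_cat.
case: s1 => [|u s1]; case: s2 => [|v s2] //=.
- by move=> _ /andP[-> /and3P[yv -> ->]]; rewrite (dpreceq_trans xy yv).
- by rewrite !cats0 => /andP[-> /and3P[-> -> l1]] _; rewrite andbT (dprec_dpreceq_trans l1 yz).
move=> /andP[a1 /and3P[xu p1 l1]] /andP[a2 /and3P[yv p2 l2]].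
move: a2 => /andP[-> ->]; rewrite a1 xu cat_path /= p1 p2 last_cat /= l2 andbT /=.
by rewrite andbT (dprec_dpreceq_trans l1 yv).
Qed.

Lemma admissible_reconfig op op' x y s :
  admissible op x y s -> all op' s -> admissible op' x y s.
Proof. by rewrite /admissible => /andP[_ ->] ->. Qed.

Lemma admissible_widen op x y y' s :
  dpreceq y y' -> admissible op x y s -> admissible op x y' s.
Proof.
move=> yy; rewrite /admissible; case: s => [|u s] //= /andP[-> /and3P[-> -> l]].
by rewrite (dprec_dpreceq_trans l yy).
Qed.

End Chains.

Section Translation.
Variables (d1 d2 : nat).
Local Notation site := (site d1 d2).
Implicit Types (a b x u v : site) (s : seq site).

Definition site_add u v : site :=
  ([ffun i => u.1 i + v.1 i], [ffun i => u.2 i + v.2 i]).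
Definition site_sub u v : site :=
  ([ffun i => u.1 i - v.1 i], [ffun i => u.2 i - v.2 i]).

Lemma site_add1E u v i : (site_add u v).1 i = u.1 i + v.1 i.
Proof. by rewrite ffunE. Qed.

Lemma site_add2E u v i : (site_add u v).2 i = u.2 i + v.2 i.
Proof. by rewrite ffunE. Qed.

Lemma site_subK x u : site_add (site_sub u x) x = u.
Proof. by case: u => u1 u2; congr pair; apply/ffunP => i; rewrite !ffunE subrK. Qed.

Lemma site_add0l x : site_add (site0 d1 d2) x = x.
Proof. by case: x => u1 u2; congr pair; apply/ffunP => i; rewrite !ffunE add0r. Qed.

Lemma site_add0r x : site_add x (site0 d1 d2) = x.
Proof. by case: x => u1 u2; congr pair; apply/ffunP => i; rewrite !ffunE addr0. Qed.

Lemma site_add_inj x : injective (site_add^~ x).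
Proof.
move=> [a1 a2] [b1 b2] [/ffunP h1 /ffunP h2]; congr pair; apply/ffunP => i.
  by move: (h1 i); rewrite !ffunE => /addIr.
by move: (h2 i); rewrite !ffunE => /addIr.
Qed.

Lemma dprec_translate a b x : dprec (site_add a x) (site_add b x) = dprec a b.
Proof. by apply/forallP/forallP => h i; have := h i; rewrite !ffunE ltrD2r. Qed.

Lemma dpreceq_translate a b x : dpreceq (site_add a x) (site_add b x) = dpreceq a b.
Proof. by apply/forallP/forallP => h i; have := h i; rewrite !ffunE lerD2r. Qed.

Lemma proj_dist_translate a b x : proj_dist (site_add a x) (site_add b x) = proj_dist a b.
Proof. by apply: eq_bigr => i _; rewrite !ffunE; congr (`|_|); ring. Qed.

Lemma Vcost_translate a s b x :
  Vcost (site_add a x) (map (site_add^~ x) s) (site_add b x) = Vcost a s b.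
Proof.
elim: s a => [|u s IH] a /=; first exact: proj_dist_translate.
by rewrite IH proj_dist_translate.
Qed.

Lemma admissible_translate op a b x s :
  admissible op (site_add a x) (site_add b x) (map (site_add^~ x) s) =
  admissible (fun v => op (site_add v x)) a b s.
Proof.
have path_tr u t : path (@dprec d1 d2) (site_add u x) (map (site_add^~ x) t) =
    path (@dprec d1 d2) u t.
  by elim: t u => [|v t IH] u //=; rewrite IH dprec_translate.
rewrite /admissible all_map; congr andb; case: s => [|u s] //=.
by rewrite dpreceq_translate path_tr (last_map (site_add^~ x)) dprec_translate.
Qed.

Lemma map_site_subK s x : map (site_add^~ x) (map (site_sub^~ x) s) = s.
Proof. by elim: s => //= u s ->; rewrite site_subK. Qed.

End Translation.

Arguments site_add {d1 d2}.
Arguments site_sub {d1 d2}.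

Lemma sup_le_sup (R : realType) (A B : set R) : A !=set0 -> has_ubound B ->
  (forall r, A r -> exists2 t, B t & r <= t) -> sup A <= sup B.
Proof.
move=> A0 hB h; apply: ge_sup => // r /h [t Bt rt].
exact: le_trans rt (ub_le_sup hB Bt).
Qed.

Section PassageValue.
Variables (d1 d2 : nat) (R : realType).
Local Notation site := (site d1 d2).
Implicit Types (op : site -> bool) (x y z : site) (s : seq site).

Definition passage_values op x y : set R :=
  [set ((size s)%:R - (Vcost x s y)%:~R : R) | s in [set s | admissible op x y s]].

Lemma SDE op x y : SD R op x y = sup (passage_values op x y).
Proof. by []. Qed.

Lemma natr_sub_intr (n : nat) (v : int) : (n%:R : R) - v%:~R = (n%:Z - v)%:~R.
Proof. by rewrite intrB pmulrn. Qed.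

Lemma passage_values0 op x y : (forall i, x.2 i = y.2 i) -> passage_values op x y 0.
Proof.
move=> h; exists [::] => //=; rewrite /proj_dist big1 ?subrr // => i _.
by rewrite h subrr.
Qed.

(* At most y_i - x_i sites fit in a chain from x to y. *)
Lemma passage_values_ub op x y i :
  x.1 i <= y.1 i -> ubound (passage_values op x y) ((y.1 i - x.1 i)%:~R).
Proof.
move=> hi r [s hs <-]; rewrite natr_sub_intr ler_int.
by have := admissible_length hi hs; have := Vcost_ge0 x s y; lia.
Qed.

Lemma passage_values_bounded op x y i :
  x.1 i <= y.1 i -> has_ubound (passage_values op x y).
Proof. by move=> hi; exists ((y.1 i - x.1 i)%:~R); exact: passage_values_ub. Qed.

Lemma SD_ge0 op x y i : (forall i, x.2 i = y.2 i) -> x.1 i <= y.1 i ->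
  0 <= SD R op x y.
Proof.
move=> h hi; rewrite SDE.
apply: (ub_le_sup (passage_values_bounded op hi)); exact: passage_values0.
Qed.

Lemma SD_le op x y i : (forall i, x.2 i = y.2 i) -> x.1 i <= y.1 i ->
  SD R op x y <= (y.1 i - x.1 i)%:~R.
Proof.
move=> h hi; rewrite SDE; apply: ge_sup; last exact: passage_values_ub.
by exists 0; exact: passage_values0.
Qed.

Lemma SD_mono op x y y' i : (forall i, x.2 i = y.2 i) -> (forall i, y.2 i = y'.2 i) ->
  dpreceq y y' -> x.1 i <= y'.1 i -> SD R op x y <= SD R op x y'.
Proof.
move=> hx hy yy hi; rewrite !SDE; apply: sup_le_sup.
- by exists 0; exact: passage_values0.
- exact: passage_values_bounded hi.
move=> r [s hs <-]; exists ((size s)%:R - (Vcost x s y)%:~R) => //.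
by exists s; [exact: admissible_widen hs | rewrite (Vcost_same_end _ _ hy)].
Qed.

(* Superadditivity: concatenate near-optimal sequences from x to y and from
   y to z; lengths add and costs are subadditive. *)
Lemma SD_superadditive op x y z (i : 'I_d1) :
  (forall i, x.2 i = y.2 i) -> (forall i, y.2 i = z.2 i) ->
  dpreceq x y -> dpreceq y z -> SD R op x y + SD R op y z <= SD R op x z.
Proof.
move=> hxy hyz xy yz.
have hi : x.1 i <= z.1 i by exact: le_trans (forallP xy i) (forallP yz i).
have hxz j : x.2 j = z.2 j by rewrite hxy hyz.
rewrite -lerBrDr !SDE; apply: ge_sup; first by exists 0; exact: passage_values0.
move=> r1 [s1 h1 <-]; rewrite lerBrDr addrC -lerBrDr; apply: ge_sup.
  by exists 0; exact: passage_values0.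
move=> r2 [s2 h2 <-]; rewrite lerBrDr.
apply: le_trans (ub_le_sup (passage_values_bounded op hi) _); last first.
  by exists (s1 ++ s2) => //; exact: admissible_cat h1 h2.
rewrite !natr_sub_intr -intrD ler_int size_cat.
by have := Vcost_cat x s1 y s2 z; lia.
Qed.

Lemma SD_translate op a b x :
  SD R op (site_add a x) (site_add b x) = SD R (fun v => op (site_add v x)) a b.
Proof.
rewrite !SDE; congr sup; apply/seteqP; split => r [s hs <-].
- exists (map (site_sub^~ x) s); first by rewrite /= -admissible_translate map_site_subK.
  by rewrite size_map -(Vcost_translate _ _ _ x) map_site_subK.
- exists (map (site_add^~ x) s); first by rewrite /= admissible_translate.
  by rewrite size_map Vcost_translate.
Qed.

(* A sequence from 0 to a level endpoint y visiting a site w with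
   |Proj(w)|_1 > y_i has negative value, so only sites of the window
   {0 <= w < y, |Proj(w)|_1 <= y_i} matter. *)
Lemma SD_window op (B : site -> bool) y i0 :
  (forall i, y.2 i = 0) -> 0 <= y.1 i0 ->
  (forall v, dpreceq (site0 d1 d2) v -> dprec v y -> \sum_i `|v.2 i| <= y.1 i0 -> B v) ->
  SD R op (site0 d1 d2) y = SD R (fun v => op v && B v) (site0 d1 d2) y.
Proof.
move=> hy hy0 hB.
have h0 i : (site0 d1 d2).2 i = y.2 i by rewrite hy ffunE.
have hi : (site0 d1 d2).1 i0 <= y.1 i0 by rewrite ffunE.
apply/eqP; rewrite eq_le !SDE; apply/andP; split; apply: sup_le_sup;
  do ?[by exists 0; exact: passage_values0 | exact: passage_values_bounded hi].
- move=> r [s hs <-]; have [allB|/allPn[w ws nBw]] := boolP (all B s).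
    exists ((size s)%:R - (Vcost (site0 d1 d2) s y)%:~R) => //.
    exists s => //; apply: admissible_reconfig (hs) _; apply/allP => w ws.
    by have /and3P[-> _ _] := admissible_between hs ws; rewrite (allP allB w ws).
  exists 0; first exact: passage_values0.
  have /and3P[_ w0 wy] := admissible_between hs ws.
  have far : y.1 i0 < \sum_i `|w.2 i|.
    by rewrite ltNge; apply/negP => /(hB w w0 wy); rewrite (negbTE nBw).
  have := Vcost_ge_visit (site0 d1 d2) y ws.
  have -> : proj_dist (site0 d1 d2) w = \sum_i `|w.2 i|.
    by apply: eq_bigr => i _; rewrite ffunE subr0.
  have -> : proj_dist w y = \sum_i `|w.2 i|.
    by apply: eq_bigr => i _; rewrite hy sub0r normrN.
  have := admissible_length hi hs; rewrite ffunE => hsize hV.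
  by rewrite natr_sub_intr -[0]/(0%:~R) ler_int; lia.
- move=> _ [s hs <-]; exists ((size s)%:R - (Vcost (site0 d1 d2) s y)%:~R) => //.
  exists s => //; apply: admissible_reconfig (hs) _.
  by apply/allP => w ws; have /andP[] := allP (proj1 (andP hs)) w ws.
Qed.

End PassageValue.

Section FiniteRange.
Context (R : realType) (dT : measure_display) (T : measurableType dT).
Variables (P : probability T R) (I : finType) (c : I -> R) (E : I -> set T) (f : T -> I).
Hypothesis mE : forall i, measurable (E i).
Hypothesis hE : forall w i, E i w <-> f w = i.
Hypothesis c0 : forall i, 0 <= c i.

Lemma finite_range_indicators w : c (f w) = \sum_i c i * \1_(E i) w.
Proof.
rewrite (bigD1 (f w)) //= big1 ?addr0.
  by rewrite indicE mem_set ?mulr1 //; apply/hE.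
by move=> i /eqP ni; rewrite indicE memNset ?mulr0 // => /hE /esym.
Qed.

Lemma measurable_finite_range : measurable_fun setT (fun w => c (f w)).
Proof.
rewrite (_ : (fun w => c (f w)) = (fun w => \sum_(i <- index_enum I) c i * \1_(E i) w)).
  apply: measurable_sum => i; apply: measurable_funM; first exact: measurable_cst.
  exact: measurable_indic.
by apply/funext => w; rewrite finite_range_indicators.
Qed.

Lemma expectation_finite_range :
  ('E_P[fun w => c (f w)] = \sum_i (c i)%:E * P (E i))%E.
Proof.
rewrite unlock (_ : (fun w => (c (f w))%:E) =
    (fun w => \sum_(i <- index_enum I) ((c i)%:E * (\1_(E i) w)%:E)%E)); last first.
  by apply/funext => w; rewrite finite_range_indicators sumEFin.
have mind i : measurable_fun setT (\1_(E i) : T -> R) by exact: measurable_indic.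
rewrite ge0_integral_sum //; last first.
- by move=> i w _; rewrite mule_ge0 // lee_fin // indicE.
- move=> i; apply/measurable_EFinP/measurable_funM => //; exact: measurable_cst.
apply: eq_bigr => i _; rewrite ge0_integralZl_EFin //.
- by rewrite integral_indic // setIT.
- exact/measurable_EFinP.
Qed.
End FiniteRange.

Lemma expectation_le_add (R : realType) (dT : measure_display) (T : measurableType dT)
  (P : probability T R) (f g h : T -> R) :
  measurable_fun setT f -> measurable_fun setT g -> measurable_fun setT h ->
  (forall w, 0 <= f w) -> (forall w, 0 <= g w) -> (forall w, f w + g w <= h w) ->
  ('E_P[f] + 'E_P[g] <= 'E_P[h])%E.
Proof.
move=> mf mg mh f0 g0 fgh.
have mE (u : T -> R) : measurable_fun setT u -> measurable_fun setT (fun w => (u w)%:E).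
  by move=> mu; exact/measurable_EFinP.
have h0 w : 0 <= h w by apply: le_trans (fgh w); exact: addr_ge0.
have ge0E (u : T -> R) : (forall w, 0 <= u w) -> forall w, setT w -> (0 <= (u w)%:E)%E.
  by move=> u0 w _; rewrite lee_fin.
rewrite unlock -ge0_integralD //; try by [exact: ge0E | exact: mE].
apply: ge0_le_integral => //; try by [exact: ge0E | exact: mE].
- by move=> w _; rewrite lee_fin addr_ge0.
- exact/mE/measurable_funD.
- by move=> w _; rewrite lee_fin.
Qed.

Section Window.
Variables (d1 d2 : nat) (i0 : 'I_d1).
Local Notation site := (site d1 d2).
Implicit Types (x y v : site).

(* W(y) is encoded by a finite type: longitudinal coordinates in
   [0, sum_i |y_i|] and transversal ones in [-|y_i0|, |y_i0|]. *)
Definition window_radius y : nat := absz (y.1 i0).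
Definition window_height y : nat := (\sum_i absz (y.1 i))%N.
Definition window y : finType :=
  ({ffun 'I_d1 -> 'I_(window_height y).+1} *
   {ffun 'I_d2 -> 'I_(window_radius y + window_radius y).+1})%type.

Definition window_site y (u : window y) : site :=
  ([ffun i => (u.1 i : nat)%:Z], [ffun i => (u.2 i : nat)%:Z - (window_radius y)%:Z]).

Lemma window_site_inj y : injective (@window_site y).
Proof.
move=> [a1 a2] [b1 b2] [/ffunP h1 /ffunP h2]; congr pair; apply/ffunP => i; apply/val_inj.
  by move: (h1 i); rewrite !ffunE => -[].
by move: (h2 i); rewrite !ffunE => /addIr -[].
Qed.

Lemma window_site_onto y v : dpreceq (site0 d1 d2) v -> dprec v y ->
  \sum_i `|v.2 i| <= y.1 i0 -> exists u : window y, window_site u = v.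
Proof.
move=> /forallP h0 /forallP h1 hs.
have hv1 i : (absz (v.1 i) < (window_height y).+1)%N.
  have := h0 i; have := h1 i; rewrite ffunE.
  have : (absz (y.1 i) <= window_height y)%N by rewrite /window_height (bigD1 i) //= leq_addr.
  lia.
have hy0 : 0 <= y.1 i0 by have := h0 i0; have := h1 i0; rewrite ffunE; lia.
have hv2 i : `|v.2 i| <= (window_radius y)%:Z.
  have : `|v.2 i| <= \sum_j `|v.2 j| by rewrite (bigD1 i) //= lerDl sumr_ge0.
  by move: hs hy0; rewrite /window_radius; lia.
have hv2' i : (absz (v.2 i + (window_radius y)%:Z)%R < (window_radius y + window_radius y).+1)%N.
  by have := hv2 i; lia.
exists ([ffun i => inord (absz (v.1 i))], [ffun i => inord (absz (v.2 i + (window_radius y)%:Z))]).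
case: v h0 h1 hs hv1 hv2 hv2' => [v1 v2] /= h0 h1 hs hv1 hv2 hv2'.
congr pair; apply/ffunP => i; rewrite !ffunE /= inordK //.
  by have := h0 i; rewrite ffunE; lia.
by have := hv2 i; rewrite /window_radius; lia.
Qed.

Variables (R : realType) (dT : measure_display) (T : measurableType dT)
  (P : probability T R) (op : site -> T -> bool) (eps : R).
Hypothesis hop : iid_bernoulli_field P op eps.

Definition window_config y x w : {ffun window y -> bool} :=
  [ffun u => op (site_add (window_site u) x) w].

Definition window_SD y (g : {ffun window y -> bool}) : R :=
  SD R (fun v => [exists u, (window_site u == v) && g u]) (site0 d1 d2) y.

Definition config_event y x (g : {ffun window y -> bool}) : set T :=
  [set w | window_config y x w = g].

Definition config_prob y (g : {ffun window y -> bool}) : R :=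
  \prod_(u <- enum (window y)) (if g u then eps else 1 - eps).

Definition mean_SD y : R :=
  \sum_(g : {ffun window y -> bool}) window_SD g * config_prob g.

Lemma SD_window_config y x w : (forall i, y.2 i = 0) -> 0 <= y.1 i0 ->
  SD R (fun v => op v w) x (site_add y x) = window_SD (window_config y x w).
Proof.
move=> hy hy0; rewrite -{1}(site_add0l x) SD_translate.
have hB v : dpreceq (site0 d1 d2) v -> dprec v y ->
    \sum_i `|v.2 i| <= y.1 i0 -> [exists u : window y, window_site u == v].
  by move=> h0 h1 hs; have [u <-] := window_site_onto h0 h1 hs; apply/existsP; exists u.
rewrite (SD_window _ _ hy hy0 hB) /window_SD; congr SD; apply/funext => v.
have [/existsP [u /eqP <-]|nB] := boolP [exists u : window y, window_site u == v].
  rewrite andbT; apply/idP/existsP => [h|[u' /andP[/eqP /window_site_inj -> ]]].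
    by exists u; rewrite eqxx ffunE h.
  by rewrite ffunE.
rewrite andbF; apply/esym/existsP => -[u /andP[eu _]]; move: nB.
by rewrite negb_exists => /forallP /(_ u); rewrite eu.
Qed.

Lemma measurable_sites_event (F : seq site) (b : site -> bool) :
  measurable [set w | forall v, v \in F -> op v w = b v].
Proof.
elim: F => [|v F IH].
  rewrite (_ : [set w | _] = setT); first exact: measurableT.
  by apply/seteqP; split => // w _ v; rewrite in_nil.
rewrite (_ : [set w | _] =
    [set w | op v w = b v] `&` [set w | forall u, u \in F -> op u w = b u]).
  apply: measurableI => //; case: (b v); first exact: hop.1.
  rewrite (_ : [set w | op v w = false] = ~` [set w | op v w]).
    by apply: measurableC; exact: hop.1.
  by apply/seteqP; split => w /=; case: (op v w).
apply/seteqP; split => w /=.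
  by move=> h; split => [|u uF]; apply: h; rewrite in_cons ?eqxx ?uF ?orbT.
by move=> [h1 h2] u; rewrite in_cons => /orP[/eqP->|/h2].
Qed.

Definition window_sites y x : seq site :=
  map (fun u => site_add (@window_site y u) x) (enum (window y)).

Lemma window_sites_uniq y x : uniq (window_sites y x).
Proof.
rewrite map_inj_uniq ?enum_uniq // => u u' /site_add_inj; exact: window_site_inj.
Qed.

Definition config_pattern y x (g : {ffun window y -> bool}) v : bool :=
  [exists u, (site_add (window_site u) x == v) && g u].

Lemma config_pattern_window y x (g : {ffun window y -> bool}) (u : window y) :
  config_pattern x g (site_add (window_site u) x) = g u.
Proof.
apply/existsP/idP => [[u' /andP[/eqP /site_add_inj /window_site_inj -> //]]|h].
by exists u; rewrite eqxx h.
Qed.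

Lemma config_eventE y x (g : {ffun window y -> bool}) : config_event x g =
  [set w | forall v, v \in window_sites y x -> op v w = config_pattern x g v].
Proof.
apply/seteqP; split => w /=.
  by move=> <- v /mapP [u _ ->]; rewrite config_pattern_window ffunE.
move=> h; apply/ffunP => u; rewrite ffunE h ?config_pattern_window //.
by apply/mapP; exists u; rewrite ?mem_enum.
Qed.

Lemma measurable_config_event y x (g : {ffun window y -> bool}) :
  measurable (config_event x g).
Proof. by rewrite config_eventE; exact: measurable_sites_event. Qed.

Lemma prob_config_event y x (g : {ffun window y -> bool}) :
  P (config_event x g) = (config_prob g)%:E.
Proof.
rewrite config_eventE hop.2 ?window_sites_uniq //.
rewrite /window_sites big_map /config_prob; congr EFin.
by apply: eq_bigr => u _; rewrite config_pattern_window.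
Qed.

Lemma window_SD_ge0 y (g : {ffun window y -> bool}) :
  (forall i, y.2 i = 0) -> 0 <= y.1 i0 -> 0 <= window_SD g.
Proof. by move=> hy hy0; apply: (@SD_ge0 _ _ _ _ _ _ i0); rewrite // ?ffunE // => i; rewrite hy ffunE. Qed.

Lemma measurable_SD_translate y x : (forall i, y.2 i = 0) -> 0 <= y.1 i0 ->
  measurable_fun setT (fun w => SD R (fun v => op v w) x (site_add y x)).
Proof.
move=> hy hy0; under eq_fun do rewrite SD_window_config //.
exact: (measurable_finite_range _ (measurable_config_event x) (fun w g => iff_refl _)).
Qed.

Lemma expectation_SD_translate y x : (forall i, y.2 i = 0) -> 0 <= y.1 i0 ->
  ('E_P[fun w => SD R (fun v => op v w) x (site_add y x)] = (mean_SD y)%:E)%E.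
Proof.
move=> hy hy0; under eq_fun do rewrite SD_window_config //.
rewrite (expectation_finite_range P (measurable_config_event x)
  (fun w g => iff_refl _) (fun g => window_SD_ge0 g hy hy0)).
rewrite /mean_SD -sumEFin; apply: eq_bigr => g _.
by rewrite prob_config_event EFinM.
Qed.

End Window.

Section MeanPassage.
Variables (d1 d2 : nat) (i0 : 'I_d1) (R : realType) (dT : measure_display)
  (T : measurableType dT) (P : probability T R) (op : site d1 d2 -> T -> bool) (eps : R).
Hypothesis hop : iid_bernoulli_field P op eps.
Local Notation site := (site d1 d2).
Local Notation o := (site0 d1 d2).
Local Notation SDrv x y := (fun w => SD R (fun v => op v w) x y).
Local Notation mean := (mean_SD i0 eps).
Implicit Types (y : site).

Definition forward_box y := (forall i, y.2 i = 0) /\ (forall i, 0 <= y.1 i).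

Lemma forward_box_add y y' : forward_box y -> forward_box y' -> forward_box (site_add y' y).
Proof.
move=> [hy2 hy1] [hy2' hy1']; split => i; rewrite ?site_add1E ?site_add2E.
  by rewrite hy2 hy2' addr0.
exact: addr_ge0.
Qed.

Lemma SD_box_ge0 x y w : forward_box y -> 0 <= SD R (fun v => op v w) x (site_add y x).
Proof.
move=> [hy2 hy1]; apply: (@SD_ge0 _ _ _ _ _ _ i0).
  by move=> i; rewrite site_add2E hy2 add0r.
by rewrite site_add1E lerDr.
Qed.

Lemma expectation_SD_box y : forward_box y -> ('E_P[SDrv o y] = (mean y)%:E)%E.
Proof.
move=> [hy2 hy1]; rewrite -[in LHS](site_add0r y).
exact: (expectation_SD_translate hop o hy2 (hy1 i0)).
Qed.

Lemma measurable_SD_box y : forward_box y -> measurable_fun setT (SDrv o y).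
Proof.
move=> [hy2 hy1]; rewrite -[in X in measurable_fun _ X](site_add0r y).
exact: (measurable_SD_translate hop o hy2 (hy1 i0)).
Qed.

Lemma SD_origin_ge0 y w : forward_box y -> 0 <= SD R (fun v => op v w) o y.
Proof. by move=> hy; rewrite -(site_add0r y); exact: SD_box_ge0. Qed.

Lemma mean_SD_ge0 y : forward_box y -> 0 <= mean y.
Proof.
move=> hy; rewrite -lee_fin -expectation_SD_box //.
by apply: expectation_ge0 => w; exact: SD_origin_ge0 w hy.
Qed.

Lemma mean_SD_le y : forward_box y -> mean y <= (y.1 i0)%:~R.
Proof.
move=> hy; rewrite -lee_fin -expectation_SD_box // -(expectation_cst P).
apply: expectation_le.
- exact: measurable_SD_box.
- exact: measurable_cst.
- by move=> w; exact: SD_origin_ge0 w hy.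
- by move=> w /=; rewrite ler0z (proj2 hy).
apply: aeW => w; apply: le_trans (SD_le _ _ (i := i0) _ _) _.
- by move=> i; rewrite (proj1 hy) ffunE.
- by rewrite ffunE (proj2 hy).
- by rewrite ffunE subr0.
Qed.

Lemma mean_SD_mono y y' : forward_box y -> forward_box y' -> dpreceq y y' ->
  mean y <= mean y'.
Proof.
move=> hy hy' yy'; rewrite -lee_fin -!expectation_SD_box //.
apply: expectation_le.
- exact: measurable_SD_box.
- exact: measurable_SD_box.
- by move=> w; exact: SD_origin_ge0 w hy.
- by move=> w; exact: SD_origin_ge0 w hy'.
apply: aeW => w; apply: (SD_mono _ _ (i := i0)) => //.
- by move=> i; rewrite (proj1 hy) ffunE.
- by move=> i; rewrite (proj1 hy) (proj1 hy').
- by rewrite ffunE (proj2 hy').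
Qed.

(* Superadditivity in expectation, using stationarity for the second leg. *)
Lemma mean_SD_superadditive y y' : forward_box y -> forward_box y' ->
  mean y + mean y' <= mean (site_add y' y).
Proof.
move=> hy hy'; have hyy' := forward_box_add hy hy'.
rewrite -lee_fin EFinD -(expectation_SD_box hy) -(expectation_SD_box hyy').
rewrite -(expectation_SD_translate hop y (proj1 hy') (proj2 hy' i0)).
apply: expectation_le_add.
- exact: measurable_SD_box.
- exact: (measurable_SD_translate hop y (proj1 hy') (proj2 hy' i0)).
- exact: measurable_SD_box.
- by move=> w; exact: SD_origin_ge0 w hy.
- by move=> w; exact: SD_box_ge0 w hy'.
move=> w; apply: (SD_superadditive _ _ i0).
- by move=> i; rewrite (proj1 hy) ffunE.
- by move=> i; rewrite site_add2E (proj1 hy) (proj1 hy') addr0.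
- by apply/forallP => i; rewrite ffunE (proj2 hy).
- by apply/forallP => i; rewrite site_add1E lerDr (proj2 hy').
Qed.

End MeanPassage.

Section Fekete.
Import numFieldNormedType.Exports.
Variables (R : realType) (a : nat -> R) (M : R).
Hypothesis a_superadditive : forall n m, a n + a m <= a (n + m)%N.
Hypothesis a_ge0 : forall n, 0 <= a n.
Hypothesis a_le : forall n, a n <= M * n%:R.

Lemma superadditive_mul q m : q%:R * a m <= a (q * m)%N.
Proof.
elim: q => [|q IH]; first by rewrite mul0r.
rewrite mulSn addnC; apply: le_trans (a_superadditive _ _).
by rewrite mulrS mulrDl mul1r addrC lerD2r.
Qed.

(* Writing n = q m + r, a_n >= q a_m >= n (a_m / m) - m M. *)
Lemma superadditive_lower m n : (0 < m <= n)%N ->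
  n%:R * ((m%:R)^-1 * a m) - m%:R * M <= a n.
Proof.
move=> /andP[m0 mn]; set t := (m%:R)^-1 * a m.
have tM : t <= M by rewrite ler_pdivrMl ?ltr0n // mulrC.
have t0 : 0 <= t by rewrite mulr_ge0 // invr_ge0.
have mt : a m = m%:R * t by rewrite /t mulrA divff ?mul1r // pnatr_eq0 -lt0n.
have split_n : a ((n %/ m) * m)%N + a (n %% m)%N <= a n.
  by rewrite {3}(divn_eq n m); exact: a_superadditive.
have hq : (n%:R - m%:R : R) <= (n %/ m)%:R * m%:R.
  rewrite -natrM -natrB // ler_nat.
  by have := divn_eq n m; have := ltn_pmod n m0; lia.
have := superadditive_mul (n %/ m) m; have := a_ge0 (n %% m)%N.
rewrite mt => h1 h2.
have : (n%:R - m%:R) * t <= (n %/ m)%:R * m%:R * t by rewrite ler_wpM2r.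
have : m%:R * t <= m%:R * M by rewrite ler_wpM2l.
lra.
Qed.

(* a_n / n converges, to sup_n a_n / n. *)
Lemma fekete : exists l : R, (fun n : nat => (n%:R)^-1 * a n) @ \oo --> l.
Proof.
set S := [set (n%:R)^-1 * a n | n in [set n | (0 < n)%N]].
have ubS : ubound S M.
  by move=> _ [n n0 <-]; rewrite ler_pdivrMl ?ltr0n // mulrC.
have hS : has_sup S by split; [exists (1%:R^-1 * a 1%N); exists 1%N | exists M].
exists (sup S); apply/cvgrPdist_le => e e0.
have e20 : 0 < e / 2 by lra.
have [_ [m m0 <-] hm] := sup_adherent e20 hS.
have {}m0 : (0 < m)%N := m0.
near=> n.
have nm : (m <= n)%N by near: n; exact: nbhs_infty_ge.
have hn : 2 * m%:R * M / e <= n%:R by near: n; exact: nbhs_infty_ger.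
have nR : 0 < (n%:R : R) by rewrite ltr0n; lia.
have upper : (n%:R)^-1 * a n <= sup S by apply: ub_le_sup; [exists M | exists n => //=; lia].
have lower := superadditive_lower (n := n) (m := m) ltac:(lia).
have hmn : 2 * m%:R * M <= e * n%:R by move: hn; rewrite ler_pdivrMr // [e * _]mulrC.
rewrite ger0_norm ?subr_ge0 // lerBlDr -lerBlDl.
rewrite -(ler_pM2l nR) mulrA divff ?mul1r ?gt_eqF //.
have : n%:R * (sup S - e / 2) <= n%:R * ((m%:R)^-1 * a m) by rewrite ler_wpM2l ?ltW.
lra.
Unshelve. all: by end_near. Qed.

End Fekete.

Section Boxes.
Variables (d1 d2 : nat) (R : realType) (z : 'I_d1 -> R).
Hypothesis z_ge0 : forall i, 0 <= z i.

Lemma floor_site_forward n : forward_box (floor_site d2 n z).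
Proof.
split=> i; rewrite ffunE //.
by rewrite floor_ge0 mulr_ge0.
Qed.

Lemma floor_site_add n m :
  dpreceq (site_add (floor_site d2 m z) (floor_site d2 n z)) (floor_site d2 (n + m) z).
Proof.
apply/forallP => i; rewrite site_add1E !ffunE.
rewrite floor_ge_int intrD natrD mulrDl addrC.
by apply: lerD; exact: floor_le.
Qed.

End Boxes.

Unset Implicit Arguments.

Theorem mainTheorem4 (d1 d2 : nat) (hd1 : (0 < d1)%N) (R : realType)
  (dT : measure_display) (T : measurableType dT) (P : probability T R)
  (eps : R) (heps : 0 <= eps <= 1)
  (op : site d1 d2 -> T -> bool) (hop : iid_bernoulli_field P op eps)
  (z : 'I_d1 -> R) (hz : forall i, 0 < z i) :
  exists l : R,
    (fun n : nat => ((n%:R)^-1)%:E *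
        'E_P[fun w => SD R (fun x => op x w) (site0 d1 d2) (floor_site d2 n z)])%E
      @ \oo --> l%:E.
Proof.
(* a_n := E[S^D(0, floor(n z))]; the first longitudinal direction i0 is the
   one used to bound the number of collected sites. *)
pose i0 : 'I_d1 := Ordinal hd1.
have z_ge0 i : 0 <= z i by exact: ltW.
pose a n := mean_SD i0 eps (floor_site d2 n z).
have box n := floor_site_forward d2 z_ge0 n.
have a_superadditive n m : a n + a m <= a (n + m)%N.
  apply: le_trans (mean_SD_superadditive i0 hop (box n) (box m)) _.
  apply: (mean_SD_mono i0 hop (forward_box_add (box n) (box m)) (box _)).
  exact: floor_site_add.
have a_le n : a n <= z i0 * n%:R.
  apply: le_trans (mean_SD_le i0 hop (box n)) _.
  by rewrite ffunE mulrC; exact: floor_le.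
have [l a_cvg] := fekete a_superadditive (fun n => mean_SD_ge0 i0 hop (box n)) a_le.
exists l; under eq_fun do rewrite (expectation_SD_box i0 hop (box _)) -EFinM.
by apply: cvg_EFin; [exact: nearW | exact: a_cvg].
Qed.
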